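(* Let $\mathfrak S=(S,\xrightarrow{F},\le)$ be a complete WSTS and $s_0\in S$. Then $Clover_{\mathfrak S}(s_0)$ is finite, and $cl(Cover_{\mathfrak S}(s_0))=\downarrow Clover_{\mathfrak S}(s_0)$.
   Context: A complete WSTS is a functional transition system $(S,\xrightarrow{F},\le)$ ($F$ finite set of partial maps; $s\to f(s)$ when $s\in\operatorname{dom}f$) such that $(S,\le)$ is a well partial order (well-founded, no infinite antichain), a dcpo (every directed subset $D$ has a lub $\bigvee D$) which is continuous (for each $x$, $\{y\mid y\ll x\}$ is directed with lub $x$; $y\ll x$ iff every directed $D$ with $x\le\bigvee D$ has an element above $y$), and every $f\in F$ is partial continuous: its domain is Scott-open and $f(\bigvee D)=\bigvee f(D)$ for every directed $D\subseteq\operatorname{dom}f$. Scott-open: upward-closed $U$ such that every directed $D$ with $\bigvee D\in U$ meets $U$; $cl(A)$ is the smallest Scott-closed (complement of Scott-open) set containing $A$. $Cover_{\mathfrak S}(s_0)=\downarrow Post^*(\downarrow s_0)$ where $Post^*$ is the reachability (reflexive-transitive) closure; $\operatorname{Lub}(E)=\{\bigvee D\mid D\subseteq E\text{ directed}\}$; $Clover_{\mathfrak S}(s_0)=\operatorname{Max}\operatorname{Lub}(Cover_{\mathfrak S}(s_0))$, $\operatorname{Max}$ denoting the set of maximal elements. *)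

From Stdlib Require Import List Relations.
Import ListNotations.

Section WSTS.
Variable S : Type.
Variable le : S -> S -> Prop.

Definition subset (A B : S -> Prop) : Prop := forall x, A x -> B x.

Definition partial_order : Prop :=
  (forall x, le x x) /\
  (forall x y, le x y -> le y x -> x = y) /\
  (forall x y z, le x y -> le y z -> le x z).

Definition lt (x y : S) : Prop := le x y /\ x <> y.

Definition wpo : Prop :=
  partial_order /\
  well_founded lt /\
  ~ (exists a : nat -> S,
        forall i j, i <> j -> ~ le (a i) (a j)).

Definition directed (D : S -> Prop) : Prop :=
  (exists d, D d) /\
  (forall x y, D x -> D y -> exists z, D z /\ le x z /\ le y z).

Definition upper_bound (D : S -> Prop) (u : S) : Prop := forall d, D d -> le d u.

Definition is_lub (D : S -> Prop) (l : S) : Prop :=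
  upper_bound D l /\ forall u, upper_bound D u -> le l u.

Definition dcpo : Prop := forall D, directed D -> exists l, is_lub D l.

Definition way_below (y x : S) : Prop :=
  forall D l, directed D -> is_lub D l -> le x l -> exists d, D d /\ le y d.

Definition continuous_dcpo : Prop :=
  dcpo /\
  forall x, directed (fun y => way_below y x) /\ is_lub (fun y => way_below y x) x.

Definition upward_closed (U : S -> Prop) : Prop :=
  forall x y, U x -> le x y -> U y.

Definition scott_open (U : S -> Prop) : Prop :=
  upward_closed U /\
  forall D l, directed D -> is_lub D l -> U l -> exists d, D d /\ U d.

Definition scott_closed (C : S -> Prop) : Prop :=
  scott_open (fun x => ~ C x).

Definition cl (A : S -> Prop) : S -> Prop :=
  fun x => forall C, scott_closed C -> subset A C -> C x.

(* partial maps are represented as functions S -> option S *)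
Definition dom (f : S -> option S) : S -> Prop := fun s => f s <> None.

Definition image (f : S -> option S) (D : S -> Prop) : S -> Prop :=
  fun y => exists d, D d /\ f d = Some y.

Definition partial_continuous (f : S -> option S) : Prop :=
  scott_open (dom f) /\
  forall D l, directed D -> subset D (dom f) -> is_lub D l ->
    exists fl, f l = Some fl /\ is_lub (image f D) fl.

Definition complete_wsts (F : list (S -> option S)) : Prop :=
  wpo /\ continuous_dcpo /\ (forall f, In f F -> partial_continuous f).

Definition step (F : list (S -> option S)) (s t : S) : Prop :=
  exists f, In f F /\ f s = Some t.

Definition reach (F : list (S -> option S)) : S -> S -> Prop :=
  clos_refl_trans S (step F).

Definition down (A : S -> Prop) : S -> Prop := fun x => exists a, A a /\ le x a.

Definition Post_star (F : list (S -> option S)) (A : S -> Prop) : S -> Prop :=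
  fun y => exists x, A x /\ reach F x y.

Definition Cover (F : list (S -> option S)) (s0 : S) : S -> Prop :=
  down (Post_star F (down (fun x => x = s0))).

Definition Lub (E : S -> Prop) : S -> Prop :=
  fun l => exists D, subset D E /\ directed D /\ is_lub D l.

Definition Max (A : S -> Prop) : S -> Prop :=
  fun x => A x /\ forall y, A y -> le x y -> y = x.

Definition Clover (F : list (S -> option S)) (s0 : S) : S -> Prop :=
  Max (Lub (Cover F s0)).

Definition finite_set (A : S -> Prop) : Prop :=
  exists l : list S, forall x, A x -> In x l.

End WSTS.

From Stdlib Require Import List.
From Stdlib Require Import Classical ClassicalEpsilon Lia PeanoNat.
Import ListNotations.

(* Neither continuity nor the transitions matter: [Cover] is downward closed,
   and in a dcpo that is a wpo every downward-closed set E has finitely many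
   lubs of directed subsets bounding all directed subsets of E.  Otherwise E
   is not directed, and removing the upper cone of one of two elements of E
   without common upper bound in E yields a strictly smaller downward-closed
   set with the same defect; iterating gives a strictly decreasing chain of
   downward-closed sets, whose differences contain a bad sequence.  The
   maximal lubs lie among those finitely many, their down-closure is
   Scott-closed, and every Scott-closed set containing E contains it. *)

Lemma dependent_choice {A : Type} (P : A -> Prop) (R : A -> A -> Prop) (a0 : A) :
  P a0 -> (forall a, P a -> exists b, P b /\ R a b) ->
  exists f : nat -> A, (forall n, P (f n)) /\ (forall n, R (f n) (f (S n))).
Proof.
  intros Ha0 Hstep.
  set (next := fun a => epsilon (inhabits a0) (fun b => P b /\ R a b)).
  set (f := fix f n := match n with 0 => a0 | S n' => next (f n') end).
  assert (Hnext : forall a, P a -> P (next a) /\ R a (next a)).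
  { intros a Ha. exact (epsilon_spec _ _ (Hstep a Ha)). }
  assert (HP : forall n, P (f n)) by (induction n; simpl; [exact Ha0 | apply Hnext; auto]).
  exists f. split; [exact HP |]. intro n. apply Hnext, HP.
Qed.

Section StrictlyIncreasing.
Variable h : nat -> nat.
Hypothesis h_incr : forall n, h n < h (S n).

Lemma strict_incr_lt n m : n < m -> h n < h m.
Proof. induction 1; [apply h_incr | specialize (h_incr m); lia]. Qed.

Lemma strict_incr_ge_id n : n <= h n.
Proof. induction n; [lia | specialize (h_incr n); lia]. Qed.

End StrictlyIncreasing.

Lemma infinitely_often_subseq (P : nat -> Prop) :
  (forall N, exists j, N <= j /\ P j) ->
  exists g : nat -> nat, (forall n, g n < g (S n)) /\ (forall n, P (g n)).
Proof.
  intros Hinf. destruct (Hinf 0) as [j0 [_ Hj0]].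
  destruct (dependent_choice P Nat.lt j0 Hj0) as [g [HP Hg]].
  - intros a _. destruct (Hinf (S a)) as [j [Hj HPj]]. exists j. split; [auto | lia].
  - exists g. auto.
Qed.

Lemma eventually_subseq (R : nat -> nat -> Prop) :
  (forall i, exists N, forall j, N <= j -> R i j) ->
  exists h : nat -> nat, (forall n, h n < h (S n)) /\
                         (forall n m, n < m -> R (h n) (h m)).
Proof.
  intros Hev. destruct (choice _ Hev) as [N HN].
  destruct (dependent_choice (fun _ => True) (fun i j => i < j /\ N i <= j) 0 I)
    as [h [_ Hh]].
  { intros i _. exists (S (i + N i)). split; [exact I | lia]. }
  assert (Hincr : forall n, h n < h (S n)) by (intro n; apply Hh).
  exists h. split; [exact Hincr |]. intros n m Hnm. apply HN.
  destruct (Hh n) as [_ HNh].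
  destruct (Nat.eq_dec m (S n)) as [-> | Hne]; [exact HNh |].
  pose proof (strict_incr_lt h Hincr (S n) m ltac:(lia)). lia.
Qed.

Section WellPartialOrder.
Variable T : Type.
Variable le : T -> T -> Prop.
Hypothesis le_refl : forall x, le x x.
Hypothesis le_antisym : forall x y, le x y -> le y x -> x = y.
Hypothesis le_trans : forall x y z, le x y -> le y z -> le x z.

Definition down_closed (E : T -> Prop) : Prop := forall x y, E y -> le x y -> E x.

Lemma down_down_closed (A : T -> Prop) : down_closed (down T le A).
Proof. intros x y [a [Ha Hya]] Hxy. exists a. eauto. Qed.

Lemma directed_upper_bound_in_list (L : list T) (D : T -> Prop) :
  directed T le D -> (forall d, D d -> down T le (fun m => In m L) d) ->
  exists m, In m L /\ upper_bound T le D m.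
Proof.
  revert D. induction L as [|y L IH]; intros D HD Hbelow.
  - destruct HD as [[d Hd] _]. destruct (Hbelow d Hd) as [m [[] _]].
  - destruct (classic (upper_bound T le D y)) as [Hy | Hy].
    + exists y. split; [left |]; auto.
    + apply not_all_ex_not in Hy as [d0 Hd0]. apply imply_to_and in Hd0 as [Hd0 Hnd0].
      set (D' := fun d => D d /\ le d0 d).
      assert (HD' : directed T le D').
      { split; [exists d0; split; auto |].
        intros x z [Hx Hx0] [Hz Hz0].
        destruct (proj2 HD x z Hx Hz) as [w [Hw [Hxw Hzw]]].
        exists w. split; [split |]; eauto. }
      destruct (IH D' HD') as [m [Hm Hub]].
      { intros d [Hd Hd0d]. destruct (Hbelow d Hd) as [m [[<- | Hm] Hdm]].
        - exfalso. eauto.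
        - exists m. auto. }
      exists m. split; [right; exact Hm |]. intros d Hd.
      destruct (proj2 HD d d0 Hd Hd0) as [w [Hw [Hdw Hd0w]]].
      apply le_trans with w; auto. apply Hub. split; auto.
Qed.

Lemma list_max_above (L : list T) (x : T) :
  down T le (fun m => In m L) x ->
  exists m, In m L /\ le x m /\ forall y, In y L -> le m y -> y = m.
Proof.
  revert x. induction L as [|y L IH]; intros x [l [Hl Hxl]]; [destruct Hl |].
  destruct (classic (down T le (fun m => In m L) x)) as [HL | HL].
  - destruct (IH x HL) as [m [Hm [Hxm Hmax]]].
    destruct (classic (le m y)) as [Hmy | Hmy].
    + exists y. split; [left |]; auto. split; [eauto |].
      intros z [<- | Hz] Hyz; auto.
      assert (z = m) as -> by eauto. apply le_antisym; auto.
    + exists m. split; [right |]; auto. split; auto.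
      intros z [<- | Hz] Hmz; [contradiction | auto].
  - destruct Hl as [<- | Hl]; [| exfalso; apply HL; exists l; auto].
    exists y. split; [left |]; auto. split; auto.
    intros z [<- | Hz] Hlz; auto. exfalso. apply HL. exists z. eauto.
Qed.

Lemma finite_set_list (M : T -> Prop) :
  finite_set T M -> exists L, forall x, M x <-> In x L.
Proof.
  intros [L HL]. revert M HL. induction L as [|y L IH]; intros M HL.
  - exists []. intro x. split; [apply HL | intros []].
  - destruct (IH (fun x => M x /\ x <> y)) as [L' HL'].
    { intros x [Hx Hne]. destruct (HL x Hx) as [-> | Hin]; [congruence | exact Hin]. }
    destruct (classic (M y)) as [Hy | Hy].
    + exists (y :: L'). intro x. simpl. rewrite <- HL'.
      destruct (classic (x = y)) as [-> | Hne]; intuition congruence.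
    + exists L'. intro x. rewrite <- HL'. split; [| tauto].
      intro Hx. split; congruence.
Qed.

Lemma scott_closed_down_finite (M : T -> Prop) :
  finite_set T M -> scott_closed T le (down T le M).
Proof.
  intros HM. destruct (finite_set_list M HM) as [L HL]. split.
  - intros u v Hnu Huv [m [Hm Hvm]]. apply Hnu. exists m. eauto.
  - intros D l HD Hl Hnl. apply NNPP. intros Hall.
    destruct (directed_upper_bound_in_list L D HD) as [m [Hm Hub]].
    { intros d Hd. apply NNPP. intro Hnd. apply Hall. exists d. split; [exact Hd |].
      intros [m [HMm Hdm]]. apply Hnd. exists m. rewrite <- HL. auto. }
    apply Hnl. exists m. split; [apply HL; exact Hm | apply (proj2 Hl); exact Hub].
Qed.

Lemma scott_closed_Lub (C E : T -> Prop) :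
  scott_closed T le C -> subset T E C -> subset T (Lub T le E) C.
Proof.
  intros HC HEC l [D [HDE [HD Hl]]]. apply NNPP. intro Hnl.
  destruct (proj2 HC D l HD Hl Hnl) as [d [Hd Hnd]]. auto.
Qed.

Lemma Lub_mem (E : T -> Prop) (e : T) : E e -> Lub T le E e.
Proof.
  intros He. exists (fun y => y = e). repeat split.
  - intros y ->. exact He.
  - exists e. reflexivity.
  - intros u v -> ->. exists e. auto.
  - intros d ->. auto.
  - intros u Hu. apply Hu. reflexivity.
Qed.

Hypothesis lt_wf : well_founded (lt T le).
Hypothesis no_antichain :
  ~ (exists a : nat -> T, forall i j, i <> j -> ~ le (a i) (a j)).

Lemma lt_minimal (P : T -> Prop) :
  (exists x, P x) -> exists x, P x /\ forall y, P y -> ~ lt T le y x.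
Proof.
  intros [x Hx]. induction x as [x IH] using (well_founded_ind lt_wf).
  destruct (classic (exists y, P y /\ lt T le y x)) as [[y [Hy Hlt]] | Hn].
  - exact (IH y Hlt Hy).
  - exists x. split; [exact Hx |]. intros y Hy Hlt. apply Hn. eauto.
Qed.

Definition good (a : nat -> T) : Prop := exists i j, i < j /\ le (a i) (a j).

Definition descends_infinitely (a : nat -> T) (i : nat) : Prop :=
  forall N, exists j, N <= j /\ lt T le (a j) (a i).

Lemma good_subseq (a : nat -> T) (g : nat -> nat) :
  (forall n, g n < g (S n)) -> good (fun n => a (g n)) -> good a.
Proof.
  intros Hg [i [j [Hij Hle]]]. exists (g i), (g j). split; [apply strict_incr_lt |]; auto.
Qed.

(* If no term descends infinitely often, a subsequence has no strict
   descents at all; a bad such subsequence would be an antichain. *)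
Lemma good_of_no_infinite_descent (a : nat -> T) :
  (forall i, ~ descends_infinitely a i) -> good a.
Proof.
  intros Hno. apply NNPP. intros Hbad.
  destruct (eventually_subseq (fun i j => ~ lt T le (a j) (a i))) as [h [Hh HR]].
  { intro i. apply NNPP. intro Hev. apply (Hno i). intro N. apply NNPP. intro Hnj.
    apply Hev. exists N. intros j Hj Hlt. apply Hnj. eauto. }
  apply no_antichain. exists (fun n => a (h n)). intros i j Hij Hle.
  apply Hbad. destruct (Nat.lt_gt_cases i j) as [[Hlt | Hgt] _]; [exact Hij | |].
  - exists (h i), (h j). split; [apply strict_incr_lt |]; auto.
  - destruct (classic (a (h i) = a (h j))) as [Heq | Hne].
    + exists (h j), (h i). split; [apply strict_incr_lt; auto | rewrite Heq; auto].
    + exfalso. apply (HR j i Hgt). split; auto.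
Qed.

(* Take a term [a i] minimal among those descending infinitely often; the
   terms strictly below it form a subsequence none of whose terms descends
   infinitely often, by minimality. *)
Lemma wpo_good (a : nat -> T) : good a.
Proof.
  destruct (classic (exists i, descends_infinitely a i)) as [Hex | Hno].
  2: { apply good_of_no_infinite_descent. intros i Hi. apply Hno. eauto. }
  destruct (lt_minimal (fun x => exists i, a i = x /\ descends_infinitely a i))
    as [x [[i [<- Hi]] Hmin]].
  { destruct Hex as [i Hi]. eauto. }
  destruct (infinitely_often_subseq (fun j => lt T le (a j) (a i)) Hi) as [g [Hg Hlt]].
  apply (good_subseq a g Hg), good_of_no_infinite_descent.
  intros k Hk. apply (Hmin (a (g k))); [| exact (Hlt k)].
  exists (g k). split; [reflexivity |]. intro N.
  destruct (Hk N) as [k' [Hk' Hlt']]. exists (g k').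
  split; [pose proof (strict_incr_ge_id g Hg k'); lia | exact Hlt'].
Qed.

Lemma no_strictly_decreasing_down_closed_chain (Es : nat -> T -> Prop) :
  (forall n, down_closed (Es n)) -> (forall n, subset T (Es (S n)) (Es n)) ->
  ~ (forall n, exists x, Es n x /\ ~ Es (S n) x).
Proof.
  intros Hdc Hdecr Hstrict.
  destruct (choice _ Hstrict) as [a Ha].
  assert (Hmono : forall i j, i < j -> subset T (Es j) (Es (S i))).
  { intros i j Hij. induction Hij as [| j Hij IH]; intros x Hx; [exact Hx |].
    apply IH, Hdecr, Hx. }
  destruct (wpo_good a) as [i [j [Hij Hle]]].
  apply (proj2 (Ha i)). apply Hdc with (a j); [| exact Hle].
  apply (Hmono i j Hij), Ha.
Qed.

Hypothesis le_dcpo : dcpo T le.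

Definition finite_lub_cover (E : T -> Prop) (L : list T) : Prop :=
  (forall l, In l L -> Lub T le E l) /\
  (forall D, subset T D E -> directed T le D ->
             exists l, In l L /\ upper_bound T le D l).

Lemma finite_lub_cover_directed (E : T -> Prop) :
  directed T le E -> exists L, finite_lub_cover E L.
Proof.
  intros Hdir. destruct (le_dcpo E Hdir) as [l Hl]. exists [l]. split.
  - intros l' [<- | []]. exists E. split; [intros x Hx; exact Hx | auto].
  - intros D HDE _. exists l. split; [left; reflexivity |].
    intros d Hd. apply (proj1 Hl). auto.
Qed.

Lemma finite_lub_cover_app (E E1 E2 : T -> Prop) (L1 L2 : list T) :
  subset T E1 E -> subset T E2 E ->
  (forall D, subset T D E -> directed T le D -> subset T D E1 \/ subset T D E2) ->
  finite_lub_cover E1 L1 -> finite_lub_cover E2 L2 -> finite_lub_cover E (L1 ++ L2).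
Proof.
  intros HE1 HE2 Hsplit [HL1 HC1] [HL2 HC2]. split.
  - intros l Hl. apply in_app_or in Hl as [Hl | Hl];
      [destruct (HL1 l Hl) as [D [HD ?]] | destruct (HL2 l Hl) as [D [HD ?]]];
      exists D; split; auto; intros x Hx; auto.
  - intros D HDE HD. destruct (Hsplit D HDE HD) as [H1 | H2].
    + destruct (HC1 D H1 HD) as [l [Hl Hub]]. exists l. split; [apply in_or_app |]; auto.
    + destruct (HC2 D H2 HD) as [l [Hl Hub]]. exists l. split; [apply in_or_app |]; auto.
Qed.

Definition remove_cone (E : T -> Prop) (a : T) : T -> Prop := fun x => E x /\ ~ le a x.

Lemma down_closed_remove_cone (E : T -> Prop) (a : T) :
  down_closed E -> down_closed (remove_cone E a).
Proof. intros Hd x y [Hy Hny] Hxy. split; [eauto | intro Hax; apply Hny; eauto]. Qed.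

Lemma directed_remove_cone (E D : T -> Prop) (a b : T) :
  ~ (exists z, E z /\ le a z /\ le b z) -> subset T D E -> directed T le D ->
  subset T D (remove_cone E a) \/ subset T D (remove_cone E b).
Proof.
  intros Hnab HDE HD. apply NNPP. intros Hn. apply not_or_and in Hn as [Ha Hb].
  assert (Hcone : forall c, ~ subset T D (remove_cone E c) -> exists d, D d /\ le c d).
  { intros c Hc. apply NNPP. intros Hnd. apply Hc. intros x Hx.
    split; [auto | intro Hcx; apply Hnd; eauto]. }
  destruct (Hcone a Ha) as [d1 [Hd1 Ha1]]. destruct (Hcone b Hb) as [d2 [Hd2 Hb2]].
  destruct (proj2 HD d1 d2 Hd1 Hd2) as [z [Hz [H1 H2]]].
  apply Hnab. exists z. split; [auto | split; eauto].
Qed.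

Lemma uncovered_shrinks (E : T -> Prop) :
  down_closed E -> ~ (exists L, finite_lub_cover E L) ->
  exists E', down_closed E' /\ ~ (exists L, finite_lub_cover E' L) /\
             subset T E' E /\ exists x, E x /\ ~ E' x.
Proof.
  intros Hd HG.
  destruct (classic (exists x, E x)) as [Hne | Hempty].
  2: { exfalso. apply HG. exists []. split; [intros l [] |].
       intros D HDE [[d Hd'] _]. exfalso. apply Hempty. eauto. }
  assert (Hab : exists a b, E a /\ E b /\ ~ exists z, E z /\ le a z /\ le b z).
  { apply NNPP. intro Hdir. apply HG, finite_lub_cover_directed.
    split; [exact Hne |]. intros x y Hx Hy. apply NNPP. intro Hn.
    apply Hdir. exists x, y. auto. }
  destruct Hab as [a [b [Ha [Hb Hnab]]]].
  assert (Hsub : forall c, subset T (remove_cone E c) E) by (intros c x [Hx _]; exact Hx).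
  assert (Hout : forall c, E c -> exists x, E x /\ ~ remove_cone E c x).
  { intros c Hc. exists c. split; [exact Hc | intros [_ Hnc]; apply Hnc, le_refl]. }
  destruct (classic (exists L1, finite_lub_cover (remove_cone E a) L1)) as [[L1 H1] | H1].
  2: { exists (remove_cone E a). split; [| split; [| split]]; auto using down_closed_remove_cone. }
  destruct (classic (exists L2, finite_lub_cover (remove_cone E b) L2)) as [[L2 H2] | H2].
  2: { exists (remove_cone E b). split; [| split; [| split]]; auto using down_closed_remove_cone. }
  exfalso. apply HG. exists (L1 ++ L2).
  apply (finite_lub_cover_app E (remove_cone E a) (remove_cone E b)); auto.
  intros D HDE HD. exact (directed_remove_cone E D a b Hnab HDE HD).
Qed.

Lemma down_closed_finite_lub_cover (E : T -> Prop) :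
  down_closed E -> exists L, finite_lub_cover E L.
Proof.
  intros Hd. apply NNPP. intros HG.
  set (P := fun E => down_closed E /\ ~ (exists L, finite_lub_cover E L)).
  set (R := fun E E' : T -> Prop => subset T E' E /\ exists x, E x /\ ~ E' x).
  destruct (dependent_choice P R E (conj Hd HG)) as [Es [HP HR]].
  { intros E0 [Hd0 HG0]. destruct (uncovered_shrinks E0 Hd0 HG0) as [E' [Hd' [HG' HR']]].
    exists E'. split; [split |]; assumption. }
  apply (no_strictly_decreasing_down_closed_chain Es).
  - intro n. apply HP.
  - intro n. apply HR.
  - intro n. apply HR.
Qed.

Section Cover.
Variable E : T -> Prop.
Variable L : list T.
Hypothesis HL : finite_lub_cover E L.

Lemma Lub_below_cover (y : T) : Lub T le E y -> down T le (fun l => In l L) y.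
Proof.
  intros [D [HDE [HD Hl]]]. destruct (proj2 HL D HDE HD) as [l [Hin Hub]].
  exists l. split; [exact Hin | apply (proj2 Hl); exact Hub].
Qed.

Lemma Lub_below_Max (y : T) : Lub T le E y -> down T le (Max T le (Lub T le E)) y.
Proof.
  intros Hy. destruct (list_max_above L y (Lub_below_cover y Hy)) as [m [Hm [Hym Hmax]]].
  exists m. split; [| exact Hym]. split; [exact (proj1 HL m Hm) |].
  intros z Hz Hmz. destruct (Lub_below_cover z Hz) as [l [Hl Hzl]].
  assert (l = m) as -> by eauto. apply le_antisym; auto.
Qed.

Lemma Max_Lub_in_cover : subset T (Max T le (Lub T le E)) (fun l => In l L).
Proof.
  intros m [Hm Hmax]. destruct (Lub_below_cover m Hm) as [l [Hl Hml]].
  rewrite <- (Hmax l (proj1 HL l Hl) Hml). exact Hl.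
Qed.

End Cover.

Lemma down_closed_Max_Lub (E : T -> Prop) :
  down_closed E ->
  finite_set T (Max T le (Lub T le E)) /\
  (forall x, cl T le E x <-> down T le (Max T le (Lub T le E)) x).
Proof.
  intros Hd. destruct (down_closed_finite_lub_cover E Hd) as [L HL].
  assert (Hfin : finite_set T (Max T le (Lub T le E))).
  { exists L. exact (Max_Lub_in_cover E L HL). }
  split; [exact Hfin |]. intro x. split.
  - intros Hcl. apply Hcl; [exact (scott_closed_down_finite _ Hfin) |].
    intros e He. apply (Lub_below_Max E L HL), Lub_mem, He.
  - intros [m [[Hm _] Hxm]] C HC HEC.
    apply NNPP. intros Hnx. apply (proj1 HC x m Hnx Hxm).
    exact (scott_closed_Lub C E HC HEC m Hm).
Qed.

End WellPartialOrder.

Theorem proposition3p7 (S : Type) (le : S -> S -> Prop) (F : list (S -> option S))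
  (HF : complete_wsts S le F) (s0 : S) :
  finite_set S (Clover S le F s0) /\
  (forall x, cl S le (Cover S le F s0) x <-> down S le (Clover S le F s0) x).
Proof.
  destruct HF as [[[Hrefl [Hantisym Htrans]] [Hwf Hanti]] [[Hdcpo _] _]].
  apply (down_closed_Max_Lub S le Hrefl Hantisym Htrans Hwf Hanti Hdcpo).
  apply down_down_closed, Htrans.
Qed.
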